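(* Let $\psi:A_1\to A_2$ be an isomorphism of double quasi-Poisson algebras over $B=\bigoplus_{s\in I}\Bbbk e_s$. If $A_1,A_2$ are quasi-Hamiltonian algebras with multiplicative moment maps $\Phi_1,\Phi_2$, then $\Phi_2=\nu\,\psi(\Phi_1)$ for some $\nu\in B^\times$ (i.e. $\nu=\sum_s\nu_se_s$ with all $\nu_s\in\Bbbk^\times$). In particular, a multiplicative moment map on a double quasi-Poisson algebra is unique up to multiplication by an element of $B^\times$.
   Context: $\Bbbk$ field of characteristic $0$; algebras associative, unital, finitely generated; $B=\bigoplus_{s\in I}\Bbbk e_s$, orthogonal idempotents summing to $1$. Sweedler notation, $(d'\otimes d'')^\circ=d''\otimes d'$, outer bimodule $a(d'\otimes d'')b=ad'\otimes d''b$. $B$-linear double bracket: bilinear $\{\!\{-,-\}\!\}:A\times A\to A\otimes A$, $\{\!\{a,b\}\!\}=-\{\!\{b,a\}\!\}^\circ$, $\{\!\{a,bc\}\!\}=\{\!\{a,b\}\!\}c+b\{\!\{a,c\}\!\}$, zero on $B$. Triple bracket $\{\!\{a,b,c\}\!\}=\{\!\{a,\{\!\{b,c\}\!\}'\}\!\}\otimes\{\!\{b,c\}\!\}''+\tau(\{\!\{b,\{\!\{c,a\}\!\}'\}\!\}\otimes\{\!\{c,a\}\!\}'')+\tau^2(\{\!\{c,\{\!\{a,b\}\!\}'\}\!\}\otimes\{\!\{a,b\}\!\}'')$, $\tau(a_1\otimes a_2\otimes a_3)=a_3\otimes a_1\otimes a_2$. Double quasi-Poisson: $\{\!\{a,b,c\}\!\}=\frac14\sum_s(ce_sa\otimes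 e_sb\otimes e_s-ce_sa\otimes e_s\otimes be_s-ce_s\otimes ae_sb\otimes e_s+ce_s\otimes ae_s\otimes be_s-e_sa\otimes e_sb\otimes e_sc+e_sa\otimes e_s\otimes be_sc+e_s\otimes ae_sb\otimes e_sc-e_s\otimes ae_s\otimes be_sc)$. Multiplicative moment map: invertible $\Phi=\sum_s\Phi_s$, $\Phi_s\in e_sAe_s$, with $\{\!\{\Phi_s,a\}\!\}=\frac12(ae_s\otimes\Phi_s-e_s\otimes\Phi_sa+a\Phi_s\otimes e_s-\Phi_s\otimes e_sa)$ for all $a,s$; quasi-Hamiltonian algebra = double quasi-Poisson algebra with multiplicative moment map. An isomorphism of double quasi-Poisson algebras is a $B$-algebra isomorphism $\psi$ with $\{\!\{\psi a,\psi b\}\!\}_2=(\psi\otimes\psi)\{\!\{a,b\}\!\}_1$. *)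

From HB Require Import structures.
From mathcomp Require Import all_boot all_order all_algebra.

Set Implicit Arguments.
Unset Strict Implicit.
Unset Printing Implicit Defensive.

Import GRing.Theory.
Local Open Scope ring_scope.

(* An element of A (x)_k A is represented by a formal sum sum_i x_i (x) y_i, *)
(* i.e. a finite list of pairs (scalars are absorbed in the first factor).   *)
(* Two representatives denote the same tensor iff they agree under every     *)
(* k-bilinear map into every k-vector space (universal property of the       *)
(* tensor product); likewise for triple tensors with trilinear maps.         *)

Section Tensors.
Variables (k : fieldType) (A : algType k).

Definition tens2 := seq (A * A).
Definition tens3 := seq (A * A * A).

Definition bilinear_map (V : lmodType k) (f : A -> A -> V) : Prop :=
  (forall (c : k) (x y z : A), f (c *: x + y) z = c *: f x z + f y z) /\
  (forall (c : k) (x y z : A), f z (c *: x + y) = c *: f z x + f z y).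

Definition trilinear_map (V : lmodType k) (f : A -> A -> A -> V) : Prop :=
  [/\ (forall (c : k) (x y u v : A), f (c *: x + y) u v = c *: f x u v + f y u v),
      (forall (c : k) (x y u v : A), f u (c *: x + y) v = c *: f u x v + f u y v)
    & (forall (c : k) (x y u v : A), f u v (c *: x + y) = c *: f u v x + f u v y)].

Definition teq2 (t u : tens2) : Prop :=
  forall (V : lmodType k) (f : A -> A -> V), bilinear_map f ->
    \sum_(p <- t) f p.1 p.2 = \sum_(p <- u) f p.1 p.2.

Definition teq3 (t u : tens3) : Prop :=
  forall (V : lmodType k) (f : A -> A -> A -> V), trilinear_map f ->
    \sum_(p <- t) f p.1.1 p.1.2 p.2 = \sum_(p <- u) f p.1.1 p.1.2 p.2.

Definition topp2 (t : tens2) : tens2 := [seq (- p.1, p.2) | p <- t].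
Definition tswap (t : tens2) : tens2 := [seq (p.2, p.1) | p <- t].
Definition touter (a : A) (t : tens2) (b : A) : tens2 :=
  [seq (a * p.1, p.2 * b) | p <- t].
Definition tscale3 (c : k) (t : tens3) : tens3 :=
  [seq (c *: p.1.1, p.1.2, p.2) | p <- t].
Definition tau3 (t : tens3) : tens3 := [seq (p.2, p.1.1, p.1.2) | p <- t].
Definition tscale2 (c : k) (t : tens2) : tens2 := [seq (c *: p.1, p.2) | p <- t].

Variable dbr : A -> A -> tens2.

Definition br_left (a : A) (t : tens2) : tens3 :=
  flatten [seq [seq (q.1, q.2, p.2) | q <- dbr a p.1] | p <- t].

Definition triple_br (a b c : A) : tens3 :=
  br_left a (dbr b c) ++ tau3 (br_left b (dbr c a))
    ++ tau3 (tau3 (br_left c (dbr a b))).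

End Tensors.

Section BAlgebras.
Variables (k : fieldType) (I : finType) (A : algType k).

Definition fin_gen : Prop :=
  exists gens : seq A, forall P : A -> Prop,
    P 1 -> (forall x, x \in gens -> P x) ->
    (forall (c : k) x, P x -> P (c *: x)) ->
    (forall x y, P x -> P y -> P (x + y)) ->
    (forall x y, P x -> P y -> P (x * y)) ->
    forall a, P a.

(* e : I -> A is a complete family of orthogonal idempotents,
   giving the B-algebra structure B -> A, e_s |-> e s *)
Definition B_structure (e : I -> A) : Prop :=
  (forall s t, e s * e t = if s == t then e s else 0) /\ \sum_(s : I) e s = 1.

Variables (e : I -> A) (dbr : A -> A -> tens2 A).

Definition double_bracket : Prop :=
  [/\ (forall (c : k) x y z, teq2 (dbr (c *: x + y) z) (tscale2 c (dbr x z) ++ dbr y z)),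
      (forall (c : k) x y z, teq2 (dbr z (c *: x + y)) (tscale2 c (dbr z x) ++ dbr z y)),
      (forall a b, teq2 (dbr a b) (topp2 (tswap (dbr b a)))),
      (forall a b c, teq2 (dbr a (b * c)) (touter 1 (dbr a b) c ++ touter b (dbr a c) 1))
    & (forall s a, teq2 (dbr (e s) a) [::])].

Definition neg3 (x y z : A) : A * A * A := (- x, y, z).

Definition qp_term (x a b c : A) : tens3 A :=
  [:: (c * x * a, x * b, x);
      neg3 (c * x * a) x (b * x);
      neg3 (c * x) (a * x * b) x;
      (c * x, a * x, b * x);
      neg3 (x * a) (x * b) (x * c);
      (x * a, x, b * x * c);
      (x, a * x * b, x * c);
      neg3 x (a * x) (b * x * c)].

Definition qp_rhs (a b c : A) : tens3 A :=
  tscale3 (4%:R)^-1 (flatten [seq qp_term (e s) a b c | s <- enum I]).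

Definition double_quasi_Poisson : Prop :=
  double_bracket /\ forall a b c, teq3 (triple_br dbr a b c) (qp_rhs a b c).

Definition invertible (x : A) : Prop := exists y, x * y = 1 /\ y * x = 1.

Definition mult_moment_map (Phi : A) : Prop :=
  invertible Phi /\
  exists Phis : I -> A,
    [/\ forall s, exists x, Phis s = e s * x * e s,
        Phi = \sum_(s : I) Phis s
      & forall s a, teq2 (dbr (Phis s) a)
          (tscale2 (2%:R)^-1
             [:: (a * e s, Phis s); (- e s, Phis s * a);
                 (a * Phis s, e s); (- Phis s, e s * a)])].

End BAlgebras.

Definition dqp_iso (k : fieldType) (I : finType) (A1 A2 : algType k)
  (e1 : I -> A1) (e2 : I -> A2) (dbr1 : A1 -> A1 -> tens2 A1)
  (dbr2 : A2 -> A2 -> tens2 A2) (psi : A1 -> A2) : Prop :=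
  [/\ (forall (c : k) x y, psi (c *: x + y) = c *: psi x + psi y),
      (forall x y, psi (x * y) = psi x * psi y),
      psi 1 = 1,
      bijective psi /\
      (forall s, psi (e1 s) = e2 s)
    & (forall a b, teq2 (dbr2 (psi a) (psi b))
                        [seq (psi p.1, psi p.2) | p <- dbr1 a b])].

From HB Require Import structures.
From mathcomp Require Import all_boot all_order all_algebra.
From mathcomp Require Import boolp classical_sets.
Import GRing.Theory.
Local Open Scope ring_scope.
Set Implicit Arguments.
Unset Strict Implicit.
Unset Printing Implicit Defensive.

(* Let Phi = sum_s P_s and Phi' = sum_s Q_s be two multiplicative moment maps
   on the same algebra A, with P_s, Q_s in the corner e_s A e_s.  Expanding
   {{Q_s, P_s}} once by the moment map axiom for Q_s, and once by
   antisymmetry and the axiom for P_s, gives P_s (x) Q_s = Q_s (x) P_s in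
   A (x) A (this only needs 2 to be invertible in k).  A symmetric simple
   tensor with P_s <> 0 forces Q_s = nu_s P_s, which we see by pairing with
   a linear functional taking the value 1 at P_s (such functionals exist by
   Zorn's lemma, via a hyperplane avoiding P_s).  Invertibility of Phi and
   Phi' shows that P_s = 0 iff e_s = 0 iff Q_s = 0, so nu_s can be chosen
   nonzero, and then Phi' = (sum_s nu_s e_s) Phi.  Finally, an isomorphism psi
   carries the moment map Phi_1 to the moment map psi(Phi_1) on A_2, so the
   theorem is the uniqueness statement applied to psi(Phi_1) and Phi_2. *)

Section LinearFunctional.
Variables (k : fieldType) (V : lmodType k).
Local Open Scope classical_set_scope.

Definition lincomb_closed (H : set V) : Prop :=
  forall (c : k) (x y : V), H x -> H y -> H (c *: x + y).

Definition linear_functional (phi : V -> k) : Prop :=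
  forall (c : k) (x y : V), phi (c *: x + y) = c * phi x + phi y.

Section Hyperplane.
Variables (H : set V) (w : V).
Hypotheses (H_closed : lincomb_closed H) (H0 : H 0) (Hw : ~ H w)
  (H_max : forall H', H `<` H' -> lincomb_closed H' -> H' w).

Let HZ (c : k) x : H x -> H (c *: x).
Proof. by move=> Hx; rewrite -[_ *: x]addr0; exact: H_closed Hx H0. Qed.

Let HD x y : H x -> H y -> H (x + y).
Proof. by move=> Hx Hy; rewrite -[x]scale1r; exact: H_closed. Qed.

Let HN x : H x -> H (- x).
Proof. by move=> Hx; rewrite -scaleN1r; exact: HZ. Qed.

(* Every vector is congruent to a multiple of w modulo H: otherwise
   H + k a would be a larger subspace still avoiding w. *)
Lemma hyperplane_coord_exists (a : V) : exists c : k, H (a - c *: w).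
Proof.
apply: contrapT => no_c.
pose Ha := fun z => exists h d, H h /\ z = h + d *: a.
have Ha_closed : lincomb_closed Ha.
  move=> c _ _ [h1 [d1 [Hh1 ->]]] [h2 [d2 [Hh2 ->]]].
  exists (c *: h1 + h2), (c * d1 + d2); split; first exact: H_closed.
  by rewrite scalerDr scalerDl scalerA addrACA.
have [h [d [Hh wE]]] : Ha w.
  apply: H_max Ha_closed; split; first by move=> h Hh; exists h, 0; rewrite scale0r addr0.
  move=> /(_ a) Ha_a; apply: no_c; exists 0; rewrite scale0r subr0; apply: Ha_a.
  by exists 0, 1; rewrite scale1r add0r.
have [d0|dn0] := eqVneq d 0; first by apply: Hw; rewrite wE d0 scale0r addr0.
apply: no_c; exists d^-1; rewrite wE scalerDr scalerA mulVf // scale1r.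
by rewrite opprD addrCA subrr addr0; apply/HN/HZ.
Qed.

Lemma hyperplane_coord_unique (a : V) (c c' : k) :
  H (a - c *: w) -> H (a - c' *: w) -> c = c'.
Proof.
move=> Hc Hc'; apply/eqP/negP => /negP cc'.
have Hdiff : H ((c' - c) *: w).
  have -> : (c' - c) *: w = (a - c *: w) - (a - c' *: w).
    by rewrite scalerBl opprB [RHS]addrC addrA subrK.
  exact/HD/HN.
apply: Hw; have := HZ (c' - c)^-1 Hdiff.
by rewrite scalerA mulVf ?scale1r // subr_eq0 eq_sym.
Qed.

Lemma hyperplane_functional :
  exists phi : V -> k, linear_functional phi /\ phi w = 1.
Proof.
pose phi a := projT1 (cid (hyperplane_coord_exists a)).
have phiP a : H (a - phi a *: w) := projT2 (cid (hyperplane_coord_exists a)).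
exists phi; split.
  move=> c x y; apply: (hyperplane_coord_unique (phiP _)).
  have -> : c *: x + y - (c * phi x + phi y) *: w
      = c *: (x - phi x *: w) + (y - phi y *: w).
    by rewrite scalerBr scalerDl scalerA opprD addrACA.
  exact: H_closed.
by apply: (hyperplane_coord_unique (phiP w)); rewrite scale1r subrr.
Qed.

End Hyperplane.

Lemma maximal_subspace_avoiding (w : V) : w != 0 ->
  exists H : set V, [/\ lincomb_closed H, H 0, ~ H w
    & forall H', H `<` H' -> lincomb_closed H' -> H' w].
Proof.
move=> w0.
have [H [[H_closed Hw] H_max_avoid]] : exists H : set V,
    (lincomb_closed H /\ ~ H w) /\ forall H', H `<` H' -> ~ (lincomb_closed H' /\ ~ H' w).
  apply: Zorn_bigcup => F F_avoid F_chain; split.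
    move=> c x y [X FX Xx] [Y FY Yy].
    have [XY|YX] := F_chain _ _ FX FY.
      by exists Y => //; apply: (F_avoid _ FY).1 => //; exact: XY.
    by exists X => //; apply: (F_avoid _ FX).1 => //; exact: YX.
  by move=> [X FX Xw]; exact: (F_avoid _ FX).2.
have H_max H' : H `<` H' -> lincomb_closed H' -> H' w.
  move=> HH' H'_closed; apply: contrapT => H'w.
  exact: H_max_avoid HH' (conj H'_closed H'w).
suff H0 : H 0 by exists H.
apply: contrapT => nH0.
have H_empty h : ~ H h.
  by move=> Hh; apply: nH0; rewrite -(addNr h) -scaleN1r; exact: H_closed.
suff : w = 0 by move/eqP; rewrite (negbTE w0).
apply: (H_max [set 0]).
  by split; [move=> x /H_empty | move=> /(_ 0 erefl)].
by move=> c _ _ -> ->; rewrite scaler0 addr0.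
Qed.

Lemma exists_functional (w : V) : w != 0 ->
  exists phi : V -> k, linear_functional phi /\ phi w = 1.
Proof.
move=> /maximal_subspace_avoiding[H [H_closed H0 Hw H_max]].
exact: hyperplane_functional H_closed H0 Hw H_max.
Qed.

End LinearFunctional.

Section KLinear.
Variables (k : fieldType) (U W : lmodType k).

Definition klinear (g : U -> W) : Prop :=
  forall (c : k) (x y : U), g (c *: x + y) = c *: g x + g y.

Variables (g : U -> W) (g_lin : klinear g).

Lemma klinear0 : g 0 = 0.
Proof.
have := g_lin 1 0 0; rewrite scaler0 addr0 scale1r => /eqP.
by rewrite -subr_eq0 opprD addrA subrr add0r oppr_eq0 => /eqP.
Qed.

Lemma klinearZ (c : k) (x : U) : g (c *: x) = c *: g x.
Proof. by rewrite -[c *: x]addr0 g_lin klinear0 addr0. Qed.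

Lemma klinearD (x y : U) : g (x + y) = g x + g y.
Proof. by rewrite -[x]scale1r g_lin !scale1r. Qed.

Lemma klinearN (x : U) : g (- x) = - g x.
Proof. by rewrite -scaleN1r klinearZ scaleN1r. Qed.

Lemma klinear_sum (J : Type) (r : seq J) (F : J -> U) :
  g (\sum_(j <- r) F j) = \sum_(j <- r) g (F j).
Proof. exact: (big_morph g klinearD klinear0). Qed.

End KLinear.

Section Bilinear.
Variables (k : fieldType) (A : algType k) (V : lmodType k).
Variables (f : A -> A -> V) (fb : bilinear_map f).

Lemma bilinear_linl (v : A) : klinear (fun u : A => f u v).
Proof. by move=> c x y; exact: fb.1. Qed.

Lemma bilinear_flip : bilinear_map (fun u v => f v u).
Proof. by split=> c x y z; [exact: fb.2 | exact: fb.1]. Qed.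

Lemma sum_topp2_tswap (t : tens2 A) :
  \sum_(p <- topp2 (tswap t)) f p.1 p.2 = - \sum_(p <- t) f p.2 p.1.
Proof.
rewrite /topp2 /tswap big_map big_map -sumrN.
by apply: eq_bigr => p _; rewrite (klinearN (bilinear_linl _)).
Qed.

Definition moment_rhs (e P a : A) : tens2 A :=
  tscale2 (2%:R)^-1 [:: (a * e, P); (- e, P * a); (a * P, e); (- P, e * a)].

Lemma sum_moment_rhs (e P a : A) :
  \sum_(p <- moment_rhs e P a) f p.1 p.2
  = (2%:R : k)^-1 *: (f (a * e) P - f e (P * a) + f (a * P) e - f P (e * a)).
Proof.
rewrite /moment_rhs /tscale2 /= !big_cons big_nil addr0.
rewrite !(klinearZ (bilinear_linl _)) !(klinearN (bilinear_linl _)).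
by rewrite !scalerDr !scalerN !addrA.
Qed.

End Bilinear.

(* The two expansions of {{Q, P}} add up to twice P (x) Q - Q (x) P. *)
Lemma expansions_sum (V : zmodType) (X Y Z W : V) :
  X - Y + Z - W + (X - Z + Y - W) = (X - W) *+ 2.
Proof.
rewrite mulr2n addrACA [X - W + _]addrACA; congr (_ + _).
by rewrite addrACA [X - Y + _]addrACA -addrA -opprD [Z + Y]addrC addNr addr0.
Qed.

Lemma cross_terms_cancel (k : fieldType) (V : lmodType k) (X Y Z W : V) :
  (2%:R : k) != 0 ->
  (2%:R : k)^-1 *: (X - Y + Z - W) = - ((2%:R : k)^-1 *: (X - Z + Y - W)) -> X = W.
Proof.
move=> two0 /eqP; rewrite -subr_eq0 opprK -scalerDr expansions_sum -scaler_nat.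
rewrite scalerA scaler_eq0 mulf_eq0 invr_eq0 (negbTE two0) /= subr_eq0.
by move/eqP.
Qed.

Section CommutingComponents.
Variables (k : fieldType) (A : algType k) (dbr : A -> A -> tens2 A).
Hypothesis two0 : (2%:R : k) != 0.
Hypothesis dbr_anti : forall a b, teq2 (dbr a b) (topp2 (tswap (dbr b a))).

(* Two elements P, Q of a corner e A e both satisfying the moment map axiom
   for the same idempotent e give a symmetric tensor: P (x) Q = Q (x) P.
   Expanding {{Q, P}} once by the axiom for Q, and once by antisymmetry and
   the axiom for P, yields 1/2 (X - Y + Z - W) = -1/2 (X - Z + Y - W) with
   X = P (x) Q, W = Q (x) P and the same cross terms Y, Z. *)
Lemma moment_components_commute (e P Q : A) :
  P * e = P -> e * P = P -> Q * e = Q -> e * Q = Q ->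
  (forall a, teq2 (dbr P a) (moment_rhs e P a)) ->
  (forall a, teq2 (dbr Q a) (moment_rhs e Q a)) ->
  forall (V : lmodType k) (f : A -> A -> V), bilinear_map f -> f P Q = f Q P.
Proof.
move=> Pe eP Qe eQ momP momQ V f fb.
have viaQ := momQ P V f fb.
have viaP := momP Q V _ (bilinear_flip fb).
have := dbr_anti Q P fb.
rewrite viaQ (sum_topp2_tswap fb) viaP.
rewrite (sum_moment_rhs fb) (sum_moment_rhs (bilinear_flip fb)) /= Pe Qe eP eQ.
exact: cross_terms_cancel.
Qed.

End CommutingComponents.

(* A symmetric simple tensor P (x) Q = Q (x) P with P nonzero forces Q to be
   a scalar multiple of P: evaluate against f(u, v) = phi(u) v with phi(P) = 1. *)
Lemma symmetric_tensor_collinear (k : fieldType) (A : algType k) (P Q : A) :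
  P != 0 ->
  (forall (V : lmodType k) (f : A -> A -> V), bilinear_map f -> f P Q = f Q P) ->
  exists c : k, Q = c *: P.
Proof.
move=> /exists_functional[phi [phi_lin phiP1]] sym.
pose f (u v : A) := phi u *: v.
have fb : bilinear_map f.
  split=> c x y z; rewrite /f; first by rewrite phi_lin scalerDl scalerA.
  by rewrite scalerDr !scalerA mulrC.
by exists (phi Q); have := sym _ f fb; rewrite /f phiP1 scale1r.
Qed.

Section Corners.
Variables (k : fieldType) (I : finType) (A : algType k) (e : I -> A).
Hypothesis e_B : B_structure e.

Lemma idem_e (t : I) : e t * e t = e t.
Proof. by rewrite e_B.1 eqxx. Qed.

Lemma corner_fixed (t : I) (X : A) :
  (exists x, X = e t * x * e t) -> X * e t = X /\ e t * X = X.
Proof. by move=> [x ->]; rewrite -!mulrA idem_e !mulrA idem_e. Qed.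

Lemma corner_component (Ps : I -> A) :
  (forall s, exists x, Ps s = e s * x * e s) ->
  forall t, e t * \sum_(s : I) Ps s = Ps t.
Proof.
move=> Ps_corner t; rewrite mulr_sumr (bigD1 t) //= big1 ?addr0.
  by have [x ->] := Ps_corner t; rewrite !mulrA idem_e.
move=> s st; have [x ->] := Ps_corner s; rewrite !mulrA e_B.1.
by rewrite eq_sym (negbTE st) !mul0r.
Qed.

End Corners.

Lemma mul_invertible_eq0 (k : fieldType) (A : algType k) (x Phi : A) :
  invertible Phi -> x * Phi = 0 -> x = 0.
Proof. by move=> [y [Phiy _]] xPhi; rewrite -[x]mulr1 -Phiy mulrA xPhi mul0r. Qed.

Section MomentMapUniqueness.
Variables (k : fieldType) (I : finType) (A : algType k).
Variables (e : I -> A) (dbr : A -> A -> tens2 A).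
Hypotheses (two0 : (2%:R : k) != 0) (e_B : B_structure e).
Hypothesis dbr_anti : forall a b, teq2 (dbr a b) (topp2 (tswap (dbr b a))).

(* The e_t-components P = e_t Phi and Q = e_t Phi' of two multiplicative
   moment maps are proportional with a nonzero factor: they commute as tensors,
   hence are collinear; and one vanishes iff e_t = 0 iff the other does. *)
Lemma moment_components_proportional (Phi Phi' P Q : A) (t : I) :
  invertible Phi -> invertible Phi' ->
  e t * Phi = P -> e t * Phi' = Q ->
  (exists x, P = e t * x * e t) -> (exists x, Q = e t * x * e t) ->
  (forall a, teq2 (dbr P a) (moment_rhs (e t) P a)) ->
  (forall a, teq2 (dbr Q a) (moment_rhs (e t) Q a)) ->
  exists c : k, c != 0 /\ Q = c *: P.
Proof.
move=> Phi_inv Phi'_inv ePhi ePhi' P_corner Q_corner momP momQ.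
have [P0|Pn0] := eqVneq P 0.
  have et0 : e t = 0 by apply: mul_invertible_eq0 Phi_inv _; rewrite ePhi.
  by exists 1; rewrite oner_neq0 scale1r P0 -ePhi' et0 mul0r.
have [Pe eP] := corner_fixed e_B P_corner.
have [Qe eQ] := corner_fixed e_B Q_corner.
have [c Qc] := symmetric_tensor_collinear Pn0
  (moment_components_commute two0 dbr_anti Pe eP Qe eQ momP momQ).
exists c; split=> //; apply: contraNneq Pn0 => c0.
have et0 : e t = 0.
  by apply: mul_invertible_eq0 Phi'_inv _; rewrite ePhi' Qc c0 scale0r.
by rewrite -ePhi et0 mul0r.
Qed.

Lemma moment_map_unique (Phi Phi' : A) :
  mult_moment_map e dbr Phi -> mult_moment_map e dbr Phi' ->
  exists nu : I -> k,
    (forall s, nu s != 0) /\ Phi' = (\sum_(s : I) nu s *: e s) * Phi.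
Proof.
move=> [Phi_inv [Ps [Ps_corner PhiE momPs]]] [Phi'_inv [Qs [Qs_corner Phi'E momQs]]].
have component t : exists c : k, c != 0 /\ Qs t = c *: Ps t.
  apply: (moment_components_proportional (t := t) Phi_inv Phi'_inv) => //.
    by rewrite PhiE corner_component.
  by rewrite Phi'E corner_component.
have [nu nuP] := choice component.
exists nu; split=> [s|]; first exact: (nuP s).1.
rewrite Phi'E mulr_suml; apply: eq_bigr => s _.
by rewrite -scalerAl PhiE corner_component // (nuP s).2.
Qed.

End MomentMapUniqueness.

Section Transport.
Variables (k : fieldType) (I : finType) (A1 A2 : algType k).
Variables (e1 : I -> A1) (e2 : I -> A2).
Variables (dbr1 : A1 -> A1 -> tens2 A1) (dbr2 : A2 -> A2 -> tens2 A2).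
Variable psi : A1 -> A2.
Hypothesis psi_iso : dqp_iso e1 e2 dbr1 dbr2 psi.

Let psi_lin : klinear psi. Proof. by case: psi_iso. Qed.
Let psiM x y : psi (x * y) = psi x * psi y. Proof. by case: psi_iso. Qed.
Let psi1 : psi 1 = 1. Proof. by case: psi_iso. Qed.
Let psi_e s : psi (e1 s) = e2 s. Proof. by case: psi_iso => _ _ _ []. Qed.
Let psi_bij : bijective psi. Proof. by case: psi_iso => _ _ _ []. Qed.
Let psi_br a b : teq2 (dbr2 (psi a) (psi b)) [seq (psi p.1, psi p.2) | p <- dbr1 a b].
Proof. by case: psi_iso. Qed.

(* An isomorphism of double brackets carries an element satisfying the moment
   map axiom for e onto one satisfying it for psi e: test the transported
   bracket against the pulled-back bilinear map f o (psi x psi). *)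
Lemma iso_moment_formula (e P : A1) :
  (forall a, teq2 (dbr1 P a) (moment_rhs e P a)) ->
  forall a, teq2 (dbr2 (psi P) a) (moment_rhs (psi e) (psi P) a).
Proof.
move=> momP a V f fb; have [psi_inv _ psi_invK] := psi_bij.
have pull_fb : bilinear_map (fun u v => f (psi u) (psi v)).
  by split=> c x y z; rewrite psi_lin; [exact: fb.1 | exact: fb.2].
rewrite -(psi_invK a) (psi_br P (psi_inv a) fb) big_map (momP _ _ _ pull_fb).
rewrite /moment_rhs /tscale2 /= !big_cons !big_nil /=.
by rewrite !(klinearZ psi_lin) !(klinearN psi_lin) !psiM.
Qed.

Lemma iso_mult_moment_map (Phi : A1) :
  mult_moment_map e1 dbr1 Phi -> mult_moment_map e2 dbr2 (psi Phi).
Proof.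
move=> [[y [Phiy yPhi]] [Ps [Ps_corner PhiE momPs]]].
split; first by exists (psi y); rewrite -!psiM Phiy yPhi psi1.
exists (fun s => psi (Ps s)); split.
- by move=> s; have [x ->] := Ps_corner s; exists (psi x); rewrite !psiM psi_e.
- by rewrite PhiE (klinear_sum psi_lin).
- by move=> s; rewrite -psi_e; exact: iso_moment_formula.
Qed.

End Transport.

Unset Implicit Arguments.

(* Main theorem. *)
Theorem mainTheorem14 (k : fieldType) (I : finType) (A1 A2 : algType k)
  (e1 : I -> A1) (e2 : I -> A2)
  (dbr1 : A1 -> A1 -> tens2 A1) (dbr2 : A2 -> A2 -> tens2 A2)
  (psi : A1 -> A2) (Phi1 : A1) (Phi2 : A2) :
  [pchar k] =i pred0 ->
  fin_gen A1 -> fin_gen A2 ->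
  B_structure e1 -> B_structure e2 ->
  double_quasi_Poisson e1 dbr1 -> double_quasi_Poisson e2 dbr2 ->
  dqp_iso e1 e2 dbr1 dbr2 psi ->
  mult_moment_map e1 dbr1 Phi1 -> mult_moment_map e2 dbr2 Phi2 ->
  exists nu : I -> k,
    (forall s, nu s != 0) /\ Phi2 = (\sum_(s : I) nu s *: e2 s) * psi Phi1.
Proof.
move=> char0 _ _ _ e2_B _ [[_ _ dbr2_anti _ _] _] psi_iso mm1 mm2.
have two0 : (2%:R : k) != 0 by move/pcharf0P: char0 => ->.
exact: (moment_map_unique two0 e2_B dbr2_anti (iso_mult_moment_map psi_iso mm1) mm2).
Qed.
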